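(* Let $(E,\mathcal{P})$ be a random locally convex module over $K$ with base $(\Omega,\mathcal{F},P)$, endowed with its $(\varepsilon,\lambda)$-topology, and let $G$ be a nonempty $L^0$-convex subset of $E$. If $G$ is $L^0$-convexly compact, then $G$ is closed in $E$.
   Context: $(\Omega,\mathcal{F},P)$ is a probability space, $K=\mathbb{R}$ or $\mathbb{C}$, $L^0(\mathcal{F},K)$ is the algebra of equivalence classes (modulo $P$-a.s. equality) of $K$-valued $\mathcal{F}$-measurable random variables, $L^0=L^0(\mathcal{F},\mathbb{R})$, $L^0_+=\{\xi\in L^0:\xi\ge0\}$. An $L^0$-seminorm on an $L^0(\mathcal{F},K)$-module $E$ is a map $\|\cdot\|:E\to L^0_+$ with $\|\xi x\|=|\xi|\|x\|$ and $\|x+y\|\le\|x\|+\|y\|$. A random locally convex module $(E,\mathcal{P})$ is an $L^0(\mathcal{F},K)$-module $E$ with a family $\mathcal{P}$ of $L^0$-seminorms such that $\bigvee\{\|x\|:\|\cdot\|\in\mathcal{P}\}=0$ iff $x=\theta$. For finite nonempty $\mathcal{Q}\subset\mathcal{P}$ let $\|x\|_{\mathcal{Q}}=\bigvee_{\|\cdot\|\in\mathcal{Q}}\|x\|$; the $(\varepsilon,\lambda)$-topology on $E$ has local base at $\theta$ the sets $\{x: P\{\|x\|_{\mathcal{Q}}<\varepsilon\}>1-\lambda\}$ ($\mathcal{Q}$ finite nonempty, $\varepsilon>0$, $0<\lambda<1$). $G\subset E$ is $L^0$-convex if $\xi x+(1-\xi)y\in G$ for all $x,y\in G$, $\xi\in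 L^0$, $0\le\xi\le1$. An $L^0$-convex set $G$ is $L^0$-convexly compact if every family of $L^0$-convex subsets of $G$ which are closed (in the relative topology of $G$) and which has the finite intersection property has nonempty intersection. *)

From HB Require Import structures.
From mathcomp Require Import all_boot all_order all_algebra.
From mathcomp Require Import all_classical all_reals all_analysis.
From mathcomp.real_closed Require Import complex.
From Stdlib Require Lists.List.
Set Implicit Arguments. Unset Strict Implicit. Unset Printing Implicit Defensive.
Import Order.TTheory GRing.Theory Num.Theory.
Local Open Scope ring_scope.
Local Open Scope classical_set_scope.

(* Conventions.
   - Scalars K are encoded inside C = R[i]: K = C when [isC = true];
     K = R when [isC = false], in which case the admissible scalar functions
     are the real-valued ones.
   - An element of L^0(F,K) is represented by a measurable function
     Omega -> R[i] (a representative of its a.s.-class); all axioms are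
     required to be invariant under P-a.s. equality.
   - An L^0(F,K)-module is an additive group E with an action [act] of the
     representatives which satisfies the module axioms and only depends on
     the a.s.-class of the scalar. *)

Section L0.
Context (R : realType) (d : measure_display) (T : measurableType d)
        (P : probability T R).

Definition creal (x : R) : R[i] := Complex x 0.

Definition cmeas (f : T -> R[i]) :=
  measurable_fun setT (fun w => complex.Re (f w)) /\ measurable_fun setT (fun w => complex.Im (f w)).

Definition L0scalar (isC : bool) (f : T -> R[i]) :=
  cmeas f /\ (~~ isC -> forall w, complex.Im (f w) = 0).

Definition ae_eq (f g : T -> R[i]) := {ae P, forall w, f w = g w}.

Record L0module (isC : bool) (E : zmodType) (act : (T -> R[i]) -> E -> E) : Prop := {
  L0m_one : forall x, act (fun _ => 1) x = x;
  L0m_mul : forall f g x, L0scalar isC f -> L0scalar isC g ->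
    act (fun w => f w * g w) x = act f (act g x);
  L0m_addl : forall f g x, L0scalar isC f -> L0scalar isC g ->
    act (fun w => f w + g w) x = act f x + act g x;
  L0m_addr : forall f x y, L0scalar isC f -> act f (x + y) = act f x + act f y;
  L0m_ae : forall f g x, L0scalar isC f -> L0scalar isC g -> ae_eq f g ->
    act f x = act g x }.

Record L0seminorm (isC : bool) (E : zmodType) (act : (T -> R[i]) -> E -> E)
    (nrm : E -> T -> R) : Prop := {
  L0n_meas : forall x, measurable_fun setT (nrm x);
  L0n_ge0 : forall x, {ae P, forall w, 0 <= nrm x w};
  L0n_hom : forall f x, L0scalar isC f ->
    {ae P, forall w, nrm (act f x) w = ComplexField.Normc.normc (f w) * nrm x w};
  L0n_tri : forall x y, {ae P, forall w, nrm (x + y) w <= nrm x w + nrm y w} }.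

Definition RLCModule (isC : bool) (E : zmodType) (act : (T -> R[i]) -> E -> E)
    (I : Type) (p : I -> E -> T -> R) :=
  [/\ L0module isC act,
      forall i, L0seminorm isC act (p i) &
      forall x, (forall i, {ae P, forall w, p i x w = 0}) <-> x = 0].

Definition normQ (E : zmodType) (I : Type) (p : I -> E -> T -> R)
    (Q : seq I) (x : E) : T -> R :=
  fun w => \big[Num.max/0]_(i <- Q) p i x w.

Definition epslamU (E : zmodType) (I : Type) (p : I -> E -> T -> R)
    (Q : seq I) (eps lam : R) : set E :=
  [set x | ((1 - lam)%:E < P [set w | (normQ p Q x w < eps)%R])%E].

Definition adherent (E : zmodType) (I : Type) (p : I -> E -> T -> R)
    (A : set E) (x : E) :=
  forall (Q : seq I) (eps lam : R), Q <> [::] -> 0 < eps -> 0 < lam < 1 ->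
    exists2 y, A y & epslamU p Q eps lam (y - x).

Definition epslam_closed (E : zmodType) (I : Type) (p : I -> E -> T -> R)
    (A : set E) := forall x, adherent p A x -> A x.

Definition rel_closed (E : zmodType) (I : Type) (p : I -> E -> T -> R)
    (G A : set E) := A `<=` G /\ forall x, G x -> adherent p A x -> A x.

Definition L0convex (E : zmodType) (act : (T -> R[i]) -> E -> E) (G : set E) :=
  forall (x y : E) (xi : T -> R), G x -> G y -> measurable_fun setT xi ->
    {ae P, forall w, 0 <= xi w <= 1} ->
    G (act (fun w => creal (xi w)) x + act (fun w => creal (1 - xi w)) y).

Definition fip (E : Type) (Fam : set (set E)) :=
  forall s : seq (set E), s <> [::] -> (forall A, Stdlib.Lists.List.In A s -> Fam A) ->
    exists x, forall A, Stdlib.Lists.List.In A s -> A x.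

Definition L0convexly_compact (E : zmodType) (act : (T -> R[i]) -> E -> E)
    (I : Type) (p : I -> E -> T -> R) (G : set E) :=
  L0convex act G /\
  forall Fam : set (set E),
    (forall A, Fam A -> L0convex act A /\ rel_closed p G A) ->
    fip Fam -> exists x, forall A, Fam A -> A x.

End L0.

From HB Require Import structures.
From mathcomp Require Import all_boot all_order all_algebra.
From mathcomp Require Import all_classical all_reals all_analysis.
From mathcomp.real_closed Require Import complex.
From mathcomp Require Import lra measurable_realfun.
Set Implicit Arguments. Unset Strict Implicit. Unset Printing Implicit Defensive.
Import Order.TTheory GRing.Theory Num.Theory.
Local Open Scope ring_scope.
Local Open Scope classical_set_scope.

(* Let x be adherent to G, and let [Gball Q eps U] be the set of z in G with
   ||z - x||_Q <= eps almost surely on the event U; these sets are L^0-convex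
   and relatively closed in G.  Adherence yields y_n in G with ||y_n - x||_Q < eps
   on events S_n of probability > 1 - 1/(n+2).  Gluing y_0, ..., y_n along
   indicator functions (an L^0-convex combination) gives points of
   [Gball Q eps (S_0 u ... u S_n)], and L^0-convex compactness turns this
   decreasing chain into a point of [Gball Q eps Omega], since the S_n exhaust
   Omega up to a null set.  The sets [Gball Q eps Omega] are downward directed,
   so compactness gives a z in all of them: then ||z - x||_Q = 0 for every Q,
   i.e. x = z lies in G. *)

Local Notation cr xi := (fun w => creal (xi w)).

Lemma le_addr_invn (R : realType) (a b : R) :
  (forall n : nat, a <= b + n.+1%:R^-1) -> a <= b.
Proof.
move=> h; rewrite leNgt; apply/negP => /ltr_add_invr[n hn].
by have := h n; rewrite leNgt hn.
Qed.

Lemma invn2_itv (R : realType) (n : nat) : 0 < (n.+2%:R : R)^-1 < 1.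
Proof. by rewrite invr_gt0 ltr0Sn invf_lt1 ?ltr0Sn // ltr1n. Qed.

Lemma ler_invnS (R : realType) (n : nat) : (n.+2%:R : R)^-1 <= n.+1%:R^-1.
Proof. by rewrite lef_pV2 ?posrE ?ltr0Sn // ler_nat. Qed.

Lemma measurable_lt_cst (R : realType) d (T : measurableType d) (f : T -> R) c :
  measurable_fun setT f -> measurable [set w | f w < c].
Proof.
move=> mf; have := mf measurableT _ (measurable_itv `]-oo, c[%R).
by rewrite setTI; congr measurable; apply/seteqP; split => w /=; rewrite in_itv.
Qed.

Lemma fip_directed (E J : Type) (J0 : set J) (D : J -> set E) :
  (forall j1 j2, J0 j1 -> J0 j2 -> exists2 j, J0 j & D j `<=` D j1 `&` D j2) ->
  (forall j, J0 j -> D j !=set0) -> fip (D @` J0).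
Proof.
move=> dirD neD [//|A0 s] _ sD.
suff [j J0j jP] : exists2 j, J0 j & forall A, List.In A (A0 :: s) -> D j `<=` A.
  by have [z Djz] := neD j J0j; exists z => A /jP; apply.
have [j0 J0j0 <-] := sD A0 (or_introl erefl).
have {}sD A : List.In A s -> (D @` J0) A by move=> hA; apply: sD; right.
elim: s sD => [|B s IH] sD; first by exists j0 => // A [<-|[]].
have [j J0j jP] := IH (fun A hA => sD A (or_intror hA)).
have [jB J0jB <-] := sD B (or_introl erefl).
have [k J0k kP] := dirD j jB J0j J0jB.
exists k => // A [<-|[<-|hA]] z /kP[Djz DjBz] //.
- by apply: jP Djz; left.
- by apply: jP Djz; right.
Qed.

Lemma L0convexly_compact_directed (R : realType) d (T : measurableType d)
    (P : probability T R) (E : zmodType) (act : (T -> R[i]) -> E -> E)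
    (I : Type) (p : I -> E -> T -> R) (G : set E)
    (J : Type) (J0 : set J) (D : J -> set E) :
  L0convexly_compact P act p G ->
  (forall j, J0 j -> L0convex P act (D j) /\ rel_closed P p G (D j)) ->
  (forall j1 j2, J0 j1 -> J0 j2 -> exists2 j, J0 j & D j `<=` D j1 `&` D j2) ->
  (forall j, J0 j -> D j !=set0) ->
  exists z, forall j, J0 j -> D j z.
Proof.
move=> [_ cpt] cvxD dirD neD.
have [|z zP] := cpt (D @` J0) _ (fip_directed dirD neD).
  by move=> _ [j J0j <-]; exact: cvxD.
by exists z => j J0j; apply: zP; exists j.
Qed.

Section probability.
Context (R : realType) d (T : measurableType d) (P : probability T R).

Lemma probability_setC_le (S : set T) (lam : R) : measurable S ->
  ((1 - lam)%:E < P S)%E -> (P (~` S) <= lam%:E)%E.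
Proof.
move=> mS; rewrite probability_setC //.
have PS_fin : P S \is a fin_num by rewrite fin_num_measure.
rewrite -(fineK PS_fin) lte_fin -EFinB lee_fin; lra.
Qed.

Lemma ae_of_large_sets (A : T -> Prop) :
  (forall lam : R, 0 < lam < 1 -> exists2 S,
     measurable S /\ ((1 - lam)%:E < P S)%E & {ae P, forall w, S w -> A w}) ->
  {ae P, forall w, A w}.
Proof.
move=> large.
have /choice[S SP] : forall n : nat, exists S, [/\ measurable S,
    ((1 - n.+2%:R^-1)%:E < P S)%E & {ae P, forall w, S w -> A w}].
  by move=> n; have [S [mS PS] SA] := large _ (invn2_itv R n); exists S.
pose Z := \bigcap_n ~` S n.
have mZ : measurable Z.
  by apply: bigcapT_measurable => n; apply: measurableC; case: (SP n).
have PZ0 : P Z = 0%E.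
  have PZ_fin : P Z \is a fin_num by rewrite fin_num_measure.
  rewrite -(fineK PZ_fin); congr (_%:E); apply/eqP.
  rewrite eq_le fine_ge0 ?measure_ge0 // andbT.
  apply: le_addr_invn => n; rewrite add0r -lee_fin (fineK PZ_fin).
  have [mS PS _] := SP n.
  apply: (@le_trans _ _ (P (~` S n))).
    apply: le_measure; rewrite ?inE //; first exact: measurableC.
    exact: bigcap_inf.
  by apply: le_trans (probability_setC_le mS PS) _; rewrite lee_fin ler_invnS.
apply: (@negligibleS _ _ _ _ (\bigcup_n (S n `&` ~` [set w | A w]) `|` Z)).
  move=> w /= nAw; have [[n Snw]|noS] := pselect (exists n, S n w).
    by left; exists n.
  by right => n _ Snw; apply: noS; exists n.
apply: negligibleU; last exact/negligibleP.
apply: negligible_bigcup => n; case: (SP n) => _ _; apply: negligibleS.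
by move=> w [Snw nAw] SA; apply/nAw/SA.
Qed.

End probability.

Section real_scalars.
Context (R : realType) d (T : measurableType d).

Lemma L0scalar_creal isC (xi : T -> R) :
  measurable_fun setT xi -> L0scalar isC (cr xi).
Proof. by move=> mxi; split; [split => /=; [|exact: measurable_cst] |]. Qed.

Lemma measurable_fun_subr1 (xi : T -> R) :
  measurable_fun setT xi -> measurable_fun setT (fun w => 1 - xi w).
Proof. by move=> mxi; apply: measurable_funB => //; exact: measurable_cst. Qed.

Lemma crealD (a b : R) : creal (a + b) = creal a + creal b.
Proof. by rewrite /creal /=; congr Complex; rewrite addr0. Qed.

Lemma normc_creal (a : R) : ComplexField.Normc.normc (creal a) = `|a|.
Proof. by rewrite /creal /= expr0n /= addr0 sqrtr_sqr. Qed.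

End real_scalars.

Section L0module_theory.
Context (R : realType) d (T : measurableType d) (P : probability T R)
  (isC : bool) (E : zmodType) (act : (T -> R[i]) -> E -> E)
  (actP : L0module P isC act).

Lemma act0 f : L0scalar isC f -> act f 0 = 0.
Proof.
move=> sf; apply: (@addrI _ (act f 0)).
by rewrite -(L0m_addr actP _ _ sf) !addr0.
Qed.

Lemma actNr f u : L0scalar isC f -> act f (- u) = - act f u.
Proof.
by move=> sf; apply/eqP; rewrite -addr_eq0 -(L0m_addr actP _ _ sf) addNr act0.
Qed.

Lemma actBr f u v : L0scalar isC f -> act f (u - v) = act f u - act f v.
Proof. by move=> sf; rewrite (L0m_addr actP _ _ sf) actNr. Qed.

Lemma act_partition (xi : T -> R) u : measurable_fun setT xi ->
  act (cr xi) u + act (cr (fun w => 1 - xi w)) u = u.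
Proof.
move=> mxi; rewrite -(L0m_addl actP u (L0scalar_creal isC mxi)
  (L0scalar_creal isC (measurable_fun_subr1 mxi))).
rewrite -[RHS](L0m_one actP); congr act; apply: funext => w.
by rewrite -crealD addrC subrK.
Qed.

Lemma actN1 u : act (fun _ => creal (-1)) u = - u.
Proof.
have cst_scalar (c : R) : L0scalar isC (fun _ : T => creal c).
  exact/L0scalar_creal/measurable_cst.
have act1 : act (fun _ => creal 1) u = u := L0m_one actP u.
have act_cst0 : act (fun _ => creal 0) u = 0.
  have := act_partition u (measurable_cst (1 : R)).
  by rewrite /= subrr act1 => h; apply: (@addrI _ u); rewrite h addr0.
have := L0m_addl actP u (cst_scalar (-1)) (cst_scalar 1).
by rewrite -crealD addNr act_cst0 act1 => /esym/eqP; rewrite addr_eq0 => /eqP.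
Qed.

Lemma act_combBr (xi : T -> R) a b c : measurable_fun setT xi ->
  act (cr xi) a + act (cr (fun w => 1 - xi w)) b - c =
  act (cr xi) (a - c) + act (cr (fun w => 1 - xi w)) (b - c).
Proof.
move=> mxi; have sxi := L0scalar_creal isC mxi.
have s1xi := L0scalar_creal isC (measurable_fun_subr1 mxi).
rewrite (actBr _ _ sxi) (actBr _ _ s1xi) -{1}(act_partition c mxi).
by rewrite opprD addrACA.
Qed.

End L0module_theory.

Section normQ_theory.
Context (R : realType) d (T : measurableType d) (P : probability T R)
  (isC : bool) (E : zmodType) (act : (T -> R[i]) -> E -> E)
  (actP : L0module P isC act) (I : Type) (p : I -> E -> T -> R)
  (pP : forall i, L0seminorm P isC act (p i)).

Lemma normQ_nil u w : normQ p [::] u w = 0.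
Proof. by rewrite /normQ big_nil. Qed.

Lemma normQ_cons i Q u w :
  normQ p (i :: Q) u w = Num.max (p i u w) (normQ p Q u w).
Proof. by rewrite /normQ big_cons. Qed.

Lemma normQ_ge0 Q u w : 0 <= normQ p Q u w.
Proof.
by elim: Q => [|i Q IH]; rewrite ?normQ_nil // normQ_cons le_max IH orbT.
Qed.

Lemma normQ_cat Q1 Q2 u w :
  normQ p (Q1 ++ Q2) u w = Num.max (normQ p Q1 u w) (normQ p Q2 u w).
Proof.
elim: Q1 => [|i Q1 IH] /=; first by rewrite normQ_nil max_r ?normQ_ge0.
by rewrite !normQ_cons IH maxA.
Qed.

Lemma measurable_normQ Q u : measurable_fun setT (normQ p Q u).
Proof.
elim: Q => [|i Q IH].
  rewrite (_ : normQ p [::] u = cst 0); first exact: measurable_cst.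
  by apply: funext => w; rewrite normQ_nil.
rewrite (_ : normQ p (i :: Q) u = p i u \max normQ p Q u); last first.
  by apply: funext => w; rewrite normQ_cons.
exact/measurable_maxr/IH/(L0n_meas (pP i)).
Qed.

Lemma ler_normQD Q u v :
  {ae P, forall w, normQ p Q (u + v) w <= normQ p Q u w + normQ p Q v w}.
Proof.
elim: Q => [|i Q IH]; first by apply: aeW => w; rewrite !normQ_nil addr0.
apply: filterS2 (L0n_tri (pP i) u v) IH => w tri_i tri_Q.
rewrite !normQ_cons ge_max; apply/andP; split.
  by apply: (le_trans tri_i); apply: lerD; rewrite le_max lexx.
by apply: (le_trans tri_Q); apply: lerD; rewrite le_max lexx orbT.
Qed.

Lemma normQ_actZ Q (xi : T -> R) u : measurable_fun setT xi ->
  {ae P, forall w, normQ p Q (act (cr xi) u) w = `|xi w| * normQ p Q u w}.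
Proof.
move=> mxi; elim: Q => [|i Q IH].
  by apply: aeW => w; rewrite !normQ_nil mulr0.
apply: filterS2 (L0n_hom (pP i) u (L0scalar_creal isC mxi)) IH => w hom_i hom_Q.
by rewrite !normQ_cons hom_i normc_creal hom_Q maxr_pMr.
Qed.

Lemma normQN Q u : {ae P, forall w, normQ p Q (- u) w = normQ p Q u w}.
Proof.
have := normQ_actZ Q u (measurable_cst (-1 : R)).
by rewrite (actN1 actP); apply: filterS => w ->; rewrite normrN1 mul1r.
Qed.

Lemma normQ_comb_le Q (xi : T -> R) a b : measurable_fun setT xi ->
  {ae P, forall w,
    normQ p Q (act (cr xi) a + act (cr (fun w => 1 - xi w)) b) w <=
    `|xi w| * normQ p Q a w + `|1 - xi w| * normQ p Q b w}.
Proof.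
move=> mxi.
apply: filterS3 (ler_normQD Q (act (cr xi) a) (act (cr (fun w => 1 - xi w)) b))
  (normQ_actZ Q a mxi) (normQ_actZ Q b (measurable_fun_subr1 mxi)).
by move=> w + ha hb; rewrite ha hb.
Qed.

End normQ_theory.

Section Gball.
Context (R : realType) d (T : measurableType d) (P : probability T R)
  (isC : bool) (E : zmodType) (act : (T -> R[i]) -> E -> E)
  (actP : L0module P isC act) (I : Type) (p : I -> E -> T -> R)
  (pP : forall i, L0seminorm P isC act (p i)) (G : set E) (x : E).

Definition Gball Q (eps : R) (U : set T) : set E :=
  [set z | G z /\ {ae P, forall w, U w -> normQ p Q (z - x) w <= eps}].

Lemma GballS Q eps U V : U `<=` V -> Gball Q eps V `<=` Gball Q eps U.
Proof. by move=> UV z [Gz zP]; split => //; apply: filterS zP => w h /UV. Qed.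

Lemma Gball_cat Q1 Q2 e1 e2 U :
  Gball (Q1 ++ Q2) (Num.min e1 e2) U `<=` Gball Q1 e1 U `&` Gball Q2 e2 U.
Proof.
move=> z [Gz zP]; split; split => //; apply: filterS zP => w h /h;
  by rewrite normQ_cat ge_max !le_min => /andP[/andP[? _] /andP[_ ?]].
Qed.

Lemma normQ_comb_subr Q (xi : T -> R) a b : measurable_fun setT xi ->
  {ae P, forall w,
    normQ p Q (act (cr xi) a + act (cr (fun w => 1 - xi w)) b - x) w <=
    `|xi w| * normQ p Q (a - x) w + `|1 - xi w| * normQ p Q (b - x) w}.
Proof. by move=> mxi; rewrite (act_combBr actP) //; exact: normQ_comb_le. Qed.

Lemma Gball_closed Q eps U : Q <> [::] -> rel_closed P p G (Gball Q eps U).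
Proof.
move=> Qn; split=> [z [] // | w0 Gw0 adh]; split => //.
have near_n n :
    {ae P, forall w, U w -> normQ p Q (w0 - x) w <= eps + n.+1%:R^-1}.
  apply: ae_of_large_sets => lam lam01.
  have invn_gt0 : 0 < (n.+1%:R : R)^-1 by rewrite invr_gt0.
  have [z [Gz zP] zlam] := adh Q n.+1%:R^-1 lam Qn invn_gt0 lam01.
  exists [set w | normQ p Q (z - w0) w < n.+1%:R^-1].
    by split; [exact/measurable_lt_cst/measurable_normQ | exact: zlam].
  near=> w => Sw Uw.
  have -> : w0 - x = (w0 - z) + (z - x) by rewrite addrA subrK.
  apply: le_trans (_ : _ <= normQ p Q (w0 - z) w + normQ p Q (z - x) w) _.
    by near: w; exact: ler_normQD.
  rewrite addrC; apply: lerD; first by move: Uw; near: w.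
  have -> : normQ p Q (w0 - z) w = normQ p Q (z - w0) w.
    by rewrite -[w0 - z]opprB; near: w; exact: (normQN actP pP).
  exact: ltW.
apply: filterS (ae_foralln near_n) => w h Uw.
by apply: le_addr_invn => n; exact: h.
Unshelve. all: by end_near.
Qed.

Lemma Gball_invn_ae0 i z : (forall n : nat, Gball [:: i] n.+1%:R^-1 setT z) ->
  {ae P, forall w, p i (z - x) w = 0}.
Proof.
move=> zP.
have : {ae P, forall w, forall n : nat, normQ p [:: i] (z - x) w <= n.+1%:R^-1}.
  by apply: ae_foralln => n; case: (zP n) => _; apply: filterS => w; apply.
apply: filterS2 (L0n_ge0 (pP i) (z - x)) => w ge0 le_invn.
apply/eqP; rewrite eq_le ge0 andbT; apply: le_addr_invn => n.
by have := le_invn n; rewrite add0r normQ_cons normQ_nil ge_max => /andP[].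
Qed.

Hypothesis G_convex : L0convex P act G.

Lemma Gball_convex Q eps U : L0convex P act (Gball Q eps U).
Proof.
move=> a b xi [Ga aP] [Gb bP] mxi xi01; split; first exact: G_convex.
near=> w => Uw.
have /andP[xi0 xi1] : 0 <= xi w <= 1 by near: w.
have aw : U w -> normQ p Q (a - x) w <= eps by near: w.
have bw : U w -> normQ p Q (b - x) w <= eps by near: w.
apply: le_trans (_ : _ <= `|xi w| * normQ p Q (a - x) w +
                          `|1 - xi w| * normQ p Q (b - x) w) _.
  by near: w; exact: normQ_comb_subr.
have xi1' : 0 <= 1 - xi w by rewrite subr_ge0.
rewrite ger0_norm // ger0_norm //.
apply: le_trans (lerD (ler_wpM2l xi0 (aw Uw)) (ler_wpM2l xi1' (bw Uw))) _.
by rewrite -mulrDl addrC subrK mul1r.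
Unshelve. all: by end_near.
Qed.

Lemma Gball_glue Q eps U V a b : measurable U ->
  Gball Q eps U a -> Gball Q eps V b ->
  Gball Q eps (U `|` V) (act (cr \1_U) a + act (cr (fun w => 1 - \1_U w)) b).
Proof.
move=> mU [Ga aP] [Gb bP].
have mind : measurable_fun setT (\1_U : T -> R) by exact: measurable_indic.
split.
  apply: G_convex => //; apply: aeW => w.
  by rewrite indicE; case: (_ \in _); rewrite /= ?ler01 ?lexx.
near=> w => UVw.
apply: le_trans (_ : _ <= `|\1_U w| * normQ p Q (a - x) w +
                          `|1 - \1_U w| * normQ p Q (b - x) w) _.
  by near: w; exact: normQ_comb_subr.
have [Uw | nUw] := pselect (U w).
  rewrite indicE mem_set // subrr normr0 mul0r addr0 normr1 mul1r.
  by move: Uw; near: w.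
rewrite indicE memNset // subr0 normr0 mul0r add0r normr1 mul1r.
have Vw : V w by case: UVw.
by move: Vw; near: w.
Unshelve. all: by end_near.
Qed.

Lemma Gball_setT_neq0 Q eps : L0convexly_compact P act p G ->
  adherent P p G x -> Q <> [::] -> 0 < eps -> Gball Q eps setT !=set0.
Proof.
move=> cpt adh Qn eps0.
have /choice[y yP] : forall n : nat,
    exists y, G y /\ epslamU P p Q eps n.+2%:R^-1 (y - x).
  by move=> n; have [y Gy yx] := adh Q eps _ Qn eps0 (invn2_itv R n); exists y.
pose S n := [set w | normQ p Q (y n - x) w < eps].
have yS n : Gball Q eps (S n) (y n).
  by split; [exact: (yP n).1 | apply: aeW => w; exact: ltW].
pose U n := \bigcup_(k in [set k | (k <= n)%N]) S k.
have mU n : measurable (U n).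
  by apply: bigcup_measurable => k _; exact/measurable_lt_cst/measurable_normQ.
have U_mono m n : (m <= n)%N -> U m `<=` U n.
  by move=> mn w [k /= km Skw]; exists k => //=; exact: leq_trans mn.
have neU n : Gball Q eps (U n) !=set0.
  elim: n => [|n [z zU]].
    exists (y 0%N); apply: GballS (yS 0%N) => w [k /=].
    by rewrite leqn0 => /eqP ->.
  eexists; apply: GballS (Gball_glue (mU n) zU (yS n.+1)) => w [k /=].
  by rewrite leq_eqVlt => /predU1P[-> | kn Skw]; [right | left; exists k].
have [||//|z zU] := L0convexly_compact_directed (J0 := setT)
    (D := fun n => Gball Q eps (U n)) cpt.
- by move=> n _; split; [exact: Gball_convex | exact: Gball_closed].
- move=> m n _ _; exists (maxn m n) => // z zP.
  by split; apply: GballS zP; apply: U_mono; rewrite ?leq_maxl ?leq_maxr.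
exists z; split; first by have [] // := zU 0%N.
apply: ae_of_large_sets => lam /andP[lam0 _].
have [k kP] := ltr_add_invr lam0.
exists (S k); first split.
- exact/measurable_lt_cst/measurable_normQ.
- apply: le_lt_trans (yP k).2; rewrite lee_fin lerD2l lerN2.
  by apply: le_trans (ltW kP); rewrite add0r ler_invnS.
- have [] // := zU k => _; apply: filterS => w h Skw _.
  by apply: h; exists k => /=.
Qed.

End Gball.

Theorem theorem4p2 (R : realType) (d : measure_display) (T : measurableType d)
    (P : probability T R) (isC : bool) (E : zmodType)
    (act : (T -> R[i]) -> E -> E) (I : Type) (p : I -> E -> T -> R)
    (G : set E) :
  RLCModule P isC act p ->
  G !=set0 -> L0convex P act G ->
  L0convexly_compact P act p G ->
  epslam_closed P p G.
Proof.
move=> [actP pP sepP] [g Gg] G_convex cpt x adh.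
(* Without seminorms, the separation axiom makes E trivial. *)
have [[i0 _] | noI] := pselect (exists i : I, True); last first.
  suff <- : g = x by [].
  by apply/subr0_eq/sepP => i; exfalso; apply: noI; exists i.
pose Gb j := Gball P p G x j.1 j.2 setT.
have [||//|z zP] := L0convexly_compact_directed
    (J0 := [set j | j.1 <> [::] /\ 0 < j.2]) (D := Gb) cpt.
- move=> [Q eps] [Qn _].
  by split; [exact: (Gball_convex actP pP) | exact: (Gball_closed actP pP)].
- move=> [Q1 e1] [Q2 e2] /= [Q1n e1_gt0] [_ e2_gt0].
  exists (Q1 ++ Q2, Num.min e1 e2); last exact: Gball_cat.
  by split => /=; [case: Q1 Q1n | rewrite lt_min e1_gt0].
- by move=> [Q eps] [Qn eps_gt0]; exact: (Gball_setT_neq0 actP pP).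
have [Gz _] : Gb ([:: i0], 1) z by apply: zP; split => //=.
suff <- : z = x by [].
apply/subr0_eq/sepP => i; apply: (Gball_invn_ae0 pP) => n.
by apply: (zP ([:: i], _)); split => //=; rewrite invr_gt0.
Qed.
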